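(* The variety $\mathcal{WHB}$ of WHB-algebras has the amalgamation property: for all WHB-algebras $\mathbf A,\mathbf B,\mathbf C$ and injective homomorphisms $i\colon\mathbf A\to\mathbf B$, $j\colon\mathbf A\to\mathbf C$, there exist a WHB-algebra $\mathbf D$ and injective homomorphisms $h\colon\mathbf B\to\mathbf D$, $k\colon\mathbf C\to\mathbf D$ with $h\circ i=k\circ j$.
   Context: A WHB-algebra is an algebra $(A,\wedge,\vee,\to,\leftarrow,0,1)$ such that $(A,\wedge,\vee,0,1)$ is a bounded distributive lattice and for all $a,b,c\in A$: $a\to a=1$; $a\to(b\wedge c)=(a\to b)\wedge(a\to c)$; $(a\vee b)\to c=(a\to c)\wedge(b\to c)$; $(a\to b)\wedge(b\to c)\le a\to c$; $a\leftarrow a=0$; $(a\vee b)\leftarrow c=(a\leftarrow c)\vee(b\leftarrow c)$; $a\leftarrow(b\wedge c)=(a\leftarrow b)\vee(a\leftarrow c)$; $a\leftarrow c\le(a\leftarrow b)\vee(b\leftarrow c)$; $a\wedge((a\to b)\leftarrow 0)\le b$; $a\le b\vee(1\to(a\leftarrow b))$. *)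

Record WHBOps (A : Type) := {
  meet : A -> A -> A;
  join : A -> A -> A;
  rimp : A -> A -> A;
  limp : A -> A -> A;
  bot : A;
  top : A
}.
Arguments meet {A}. Arguments join {A}. Arguments rimp {A}.
Arguments limp {A}. Arguments bot {A}. Arguments top {A}.

Definition le {A} (o : WHBOps A) (a b : A) : Prop := meet o a b = a.

Definition is_WHB {A : Type} (o : WHBOps A) : Prop :=
  let m := meet o in let j := join o in let r := rimp o in let l := limp o in
  let z := bot o in let u := top o in
  (forall a b c, m a (m b c) = m (m a b) c) /\
  (forall a b c, j a (j b c) = j (j a b) c) /\
  (forall a b, m a b = m b a) /\
  (forall a b, j a b = j b a) /\
  (forall a b, m a (j a b) = a) /\
  (forall a b, j a (m a b) = a) /\
  (forall a b c, m a (j b c) = j (m a b) (m a c)) /\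
  (forall a, m a z = z) /\
  (forall a, j a u = u) /\
  (forall a, r a a = u) /\
  (forall a b c, r a (m b c) = m (r a b) (r a c)) /\
  (forall a b c, r (j a b) c = m (r a c) (r b c)) /\
  (forall a b c, le o (m (r a b) (r b c)) (r a c)) /\
  (forall a, l a a = z) /\
  (forall a b c, l (j a b) c = j (l a c) (l b c)) /\
  (forall a b c, l a (m b c) = j (l a b) (l a c)) /\
  (forall a b c, le o (l a c) (j (l a b) (l b c))) /\
  (forall a b, le o (m a (l (r a b) z)) b) /\
  (forall a b, le o a (j b (r u (l a b)))).

Record WHBAlgebra := {
  carrier :> Type;
  ops : WHBOps carrier;
  whb_ax : is_WHB ops
}.

Definition is_hom (A B : WHBAlgebra) (f : A -> B) : Prop :=
  (forall a b, f (meet (ops A) a b) = meet (ops B) (f a) (f b)) /\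
  (forall a b, f (join (ops A) a b) = join (ops B) (f a) (f b)) /\
  (forall a b, f (rimp (ops A) a b) = rimp (ops B) (f a) (f b)) /\
  (forall a b, f (limp (ops A) a b) = limp (ops B) (f a) (f b)) /\
  f (bot (ops A)) = bot (ops B) /\
  f (top (ops A)) = top (ops B).

Definition injective {X Y : Type} (f : X -> Y) : Prop :=
  forall x y, f x = f y -> x = y.

(* Every WHB-algebra embeds into the complex algebra of its canonical frame: the
   prime filters, with x R x' iff a ⇒ b ∈ x and a ∈ x' imply b ∈ x'.  To amalgamate
   B and C over A, take instead the frame of pairs (x, y) of prime filters of B and C
   that agree on A, related componentwise, and embed B and C by b ↦ {(x, y) | b ∈ x}
   and c ↦ {(x, y) | c ∈ y}.  These maps preserve ⇒ and ⇐ because the projections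
   satisfy the back conditions: a successor (predecessor) x' of x given by the prime
   filter theorem restricts to a successor of the common restriction of x and y to A,
   and the prime filter theorem lifts that along A ↪ C to a successor y' of y which
   agrees with x' on A.  They are injective because every prime filter of B (resp. C)
   extends to such a pair. *)

From Stdlib Require Import Classical FunctionalExtensionality PropExtensionality.
From mathcomp Require classical_sets.

Notation "a ⊓ b" := (meet (ops _) a b) (at level 40, left associativity).
Notation "a ⊔ b" := (join (ops _) a b) (at level 50, left associativity).
Notation "a ⇒ b" := (rimp (ops _) a b) (at level 55, no associativity).
Notation "a ⇐ b" := (limp (ops _) a b) (at level 55, no associativity).
Notation "⊥" := (bot (ops _)).
Notation "⊤" := (top (ops _)).
Notation "a ≼ b" := (le (ops _) a b) (at level 70).

Section WHBLaws.
Context {A : WHBAlgebra}.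
Implicit Types a b c : A.

Ltac whb_axiom :=
  let H := fresh in
  intros; pose proof (whb_ax A) as H; unfold is_WHB in H; cbv zeta in H;
  decompose [and] H; auto.

Lemma meetA a b c : a ⊓ (b ⊓ c) = a ⊓ b ⊓ c. Proof. whb_axiom. Qed.
Lemma joinA a b c : a ⊔ (b ⊔ c) = a ⊔ b ⊔ c. Proof. whb_axiom. Qed.
Lemma meetC a b : a ⊓ b = b ⊓ a. Proof. whb_axiom. Qed.
Lemma joinC a b : a ⊔ b = b ⊔ a. Proof. whb_axiom. Qed.
Lemma meetKU a b : a ⊓ (a ⊔ b) = a. Proof. whb_axiom. Qed.
Lemma joinKI a b : a ⊔ a ⊓ b = a. Proof. whb_axiom. Qed.
Lemma meetUr a b c : a ⊓ (b ⊔ c) = a ⊓ b ⊔ a ⊓ c. Proof. whb_axiom. Qed.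
Lemma meetx0 a : a ⊓ ⊥ = ⊥. Proof. whb_axiom. Qed.
Lemma joinx1 a : a ⊔ ⊤ = ⊤. Proof. whb_axiom. Qed.
Lemma rimpp a : a ⇒ a = ⊤. Proof. whb_axiom. Qed.
Lemma rimpIr a b c : a ⇒ b ⊓ c = (a ⇒ b) ⊓ (a ⇒ c). Proof. whb_axiom. Qed.
Lemma rimpUl a b c : a ⊔ b ⇒ c = (a ⇒ c) ⊓ (b ⇒ c). Proof. whb_axiom. Qed.
Lemma limpp a : a ⇐ a = ⊥. Proof. whb_axiom. Qed.
Lemma limpUl a b c : a ⊔ b ⇐ c = (a ⇐ c) ⊔ (b ⇐ c). Proof. whb_axiom. Qed.
Lemma limpIr a b c : a ⇐ b ⊓ c = (a ⇐ b) ⊔ (a ⇐ c). Proof. whb_axiom. Qed.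
Lemma meet_limp0_le a b : a ⊓ ((a ⇒ b) ⇐ ⊥) ≼ b. Proof. whb_axiom. Qed.
Lemma le_join_rimp1 a b : a ≼ b ⊔ (⊤ ⇒ (a ⇐ b)). Proof. whb_axiom. Qed.

End WHBLaws.

Section Lattice.
Context {A : WHBAlgebra}.
Implicit Types a b c : A.

Lemma meetxx a : a ⊓ a = a.
Proof. rewrite <- (joinKI a a) at 2. apply meetKU. Qed.

Lemma le_refl a : a ≼ a.
Proof. apply meetxx. Qed.

Lemma le_trans a b c : a ≼ b -> b ≼ c -> a ≼ c.
Proof. unfold le. intros hab hbc. rewrite <- hab at 1. rewrite <- meetA, hbc. exact hab. Qed.

Lemma le_anti a b : a ≼ b -> b ≼ a -> a = b.
Proof. unfold le. intros hab hba. rewrite <- hab, meetC. exact hba. Qed.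

Lemma leEjoin a b : a ≼ b <-> a ⊔ b = b.
Proof.
  unfold le. split; intro h.
  - rewrite <- h, meetC, joinC. apply joinKI.
  - rewrite <- h. apply meetKU.
Qed.

Lemma leIl a b : a ⊓ b ≼ a.
Proof. unfold le. rewrite meetC, meetA, meetxx. reflexivity. Qed.

Lemma leIr a b : a ⊓ b ≼ b.
Proof. unfold le. rewrite <- meetA, meetxx. reflexivity. Qed.

Lemma lexI a b c : c ≼ a -> c ≼ b -> c ≼ a ⊓ b.
Proof. unfold le. intros hca hcb. rewrite meetA, hca, hcb. reflexivity. Qed.

Lemma leUl a b : a ≼ a ⊔ b.
Proof. apply meetKU. Qed.

Lemma leUr a b : b ≼ a ⊔ b.
Proof. rewrite joinC. apply meetKU. Qed.

Lemma leUx a b c : a ≼ c -> b ≼ c -> a ⊔ b ≼ c.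
Proof. rewrite !leEjoin. intros hac hbc. rewrite <- joinA, hbc, hac. reflexivity. Qed.

Lemma lex1 a : a ≼ ⊤.
Proof. apply leEjoin, joinx1. Qed.

Lemma le0x a : ⊥ ≼ a.
Proof. unfold le. rewrite meetC. apply meetx0. Qed.

Lemma meetx1 a : a ⊓ ⊤ = a.
Proof. apply lex1. Qed.

Lemma joinx0 a : a ⊔ ⊥ = a.
Proof. rewrite <- (meetx0 a). apply joinKI. Qed.

Lemma leI2 a a' b b' : a ≼ a' -> b ≼ b' -> a ⊓ b ≼ a' ⊓ b'.
Proof. intros. apply lexI; [apply le_trans with a | apply le_trans with b]; auto using leIl, leIr. Qed.

Lemma leU2 a a' b b' : a ≼ a' -> b ≼ b' -> a ⊔ b ≼ a' ⊔ b'.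
Proof. intros. apply leUx; [apply le_trans with a' | apply le_trans with b']; auto using leUl, leUr. Qed.

Lemma joinIr a b c : a ⊔ b ⊓ c = (a ⊔ b) ⊓ (a ⊔ c).
Proof.
  rewrite meetUr, (meetC _ a), meetKU, (meetC (a ⊔ b) c), meetUr, joinA, (meetC c a), joinKI.
  rewrite meetC. reflexivity.
Qed.

Lemma rimp_le a a' b b' : a' ≼ a -> b ≼ b' -> a ⇒ b ≼ a' ⇒ b'.
Proof.
  intros ha hb. apply le_trans with (a' ⇒ b).
  - apply leEjoin in ha. rewrite <- ha, rimpUl. apply leIl.
  - unfold le in hb. rewrite <- hb, rimpIr. apply leIr.
Qed.

Lemma limp_le a a' b b' : a ≼ a' -> b' ≼ b -> a ⇐ b ≼ a' ⇐ b'.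
Proof.
  intros ha hb. apply le_trans with (a' ⇐ b).
  - apply leEjoin in ha. rewrite <- ha, limpUl. apply leUl.
  - unfold le in hb. rewrite <- hb, limpIr. apply leUr.
Qed.

Lemma rimp1_le_rimp a b e : a ⊓ e ≼ b -> ⊤ ⇒ e ≼ a ⇒ b.
Proof.
  intro h. apply le_trans with (a ⇒ e); [apply rimp_le; [apply lex1 | apply le_refl]|].
  replace (a ⇒ e) with (a ⇒ a ⊓ e) by (rewrite rimpIr, rimpp, meetC; apply meetx1).
  apply rimp_le; [apply le_refl | exact h].
Qed.

Lemma limp_le_limp0 a b e : a ≼ b ⊔ e -> a ⇐ b ≼ e ⇐ ⊥.
Proof.
  intro h. apply le_trans with (b ⊔ e ⇐ b); [apply limp_le; [exact h | apply le_refl]|].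
  rewrite limpUl, limpp, joinC, joinx0.
  apply limp_le; [apply le_refl | apply le0x].
Qed.

End Lattice.

Record prime_filter {A : WHBAlgebra} (x : A -> Prop) : Prop := {
  pf_meet : forall a b, x (a ⊓ b) <-> x a /\ x b;
  pf_join : forall a b, x (a ⊔ b) <-> x a \/ x b;
  pf_bot : ~ x ⊥;
  pf_top : x ⊤
}.

Lemma pf_le {A : WHBAlgebra} (x : A -> Prop) a b : prime_filter x -> x a -> a ≼ b -> x b.
Proof. intros px xa hab. rewrite <- hab in xa. apply (pf_meet _ px) in xa. tauto. Qed.

Definition down_directed {A : WHBAlgebra} (P : A -> Prop) :=
  (exists p, P p) /\ forall p p', P p -> P p' -> exists q, P q /\ q ≼ p /\ q ≼ p'.

Definition up_directed {A : WHBAlgebra} (N : A -> Prop) :=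
  (exists n, N n) /\ forall n n', N n -> N n' -> exists m, N m /\ n ≼ m /\ n' ≼ m.

Lemma down_directed_single {A : WHBAlgebra} (b : A) : down_directed (fun e => e = b).
Proof. split; [exists b; reflexivity|]. intros p p' -> ->. exists b. auto using le_refl. Qed.

Lemma up_directed_single {A : WHBAlgebra} (b : A) : up_directed (fun e => e = b).
Proof. split; [exists b; reflexivity|]. intros n n' -> ->. exists b. auto using le_refl. Qed.

Section PrimeFilterTheorem.
Context {A : WHBAlgebra} (P N : A -> Prop).
Hypotheses (P_dir : down_directed P) (N_dir : up_directed N)
  (P_N_apart : forall p n, P p -> N n -> ~ p ≼ n).

Let avoiding_ideal (I : A -> Prop) :=
  (forall a b, I a -> b ≼ a -> I b) /\ (forall a b, I a -> I b -> I (a ⊔ b)) /\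
  (forall p, P p -> ~ I p).

Let below_N (e : A) := exists n, N n /\ e ≼ n.

(* Zorn's lemma needs the union of the empty chain to be admissible, so [K] is only
   required to be an ideal together with [below_N]. *)
Let admissible (K : A -> Prop) := avoiding_ideal (fun e => K e \/ below_N e).

Lemma below_N_avoiding : avoiding_ideal below_N.
Proof.
  destruct N_dir as [_ N_up]. split; [|split].
  - intros a b [n [Nn han]] hba. exists n. split; [exact Nn | exact (le_trans _ _ _ hba han)].
  - intros a b [n [Nn han]] [n' [Nn' hbn']].
    destruct (N_up n n' Nn Nn') as [m [Nm [hnm hn'm]]].
    exists m. split; [exact Nm|]. apply leUx; eapply le_trans; eauto.
  - intros p Pp [n [Nn hpn]]. exact (P_N_apart p n Pp Nn hpn).
Qed.

Lemma chain_union_admissible (F : classical_sets.set (classical_sets.set A)) :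
  classical_sets.subset F admissible -> classical_sets.total_on F classical_sets.subset ->
  admissible (classical_sets.bigcup F (fun X => X)).
Proof.
  intros F_adm F_chain.
  destruct below_N_avoiding as [Bdown [Bjoin Bavoid]].
  split; [|split].
  - intros a b [[X FX Xa] | Ba] hba.
    + destruct (proj1 (F_adm X FX) a b (or_introl Xa) hba) as [Xb | Bb];
        [left; exists X; assumption | right; exact Bb].
    + right. exact (Bdown a b Ba hba).
  - assert (in_one : forall X a b, F X -> X a \/ below_N a -> X b \/ below_N b ->
              classical_sets.bigcup F (fun X => X) (a ⊔ b) \/ below_N (a ⊔ b)).
    { intros X a b FX ha hb.
      destruct (proj1 (proj2 (F_adm X FX)) a b ha hb) as [Xab | Bab];
        [left; exists X; assumption | right; exact Bab]. }
    intros a b [[X FX Xa] | Ba] [[Y FY Yb] | Bb].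
    + destruct (F_chain X Y FX FY) as [XY | YX].
      * apply (in_one Y); auto.
      * apply (in_one X); auto.
    + apply (in_one X); auto.
    + apply (in_one Y); auto.
    + right. exact (Bjoin a b Ba Bb).
  - intros p Pp [[X FX Xp] | Bp].
    + exact (proj2 (proj2 (F_adm X FX)) p Pp (or_introl Xp)).
    + exact (Bavoid p Pp Bp).
Qed.

Lemma avoiding_extension (I : A -> Prop) (e : A) :
  avoiding_ideal I -> ~ (exists p t, P p /\ I t /\ p ≼ t ⊔ e) ->
  avoiding_ideal (fun a => exists t, I t /\ a ≼ t ⊔ e).
Proof.
  intros [Idown [Ijoin Iavoid]] no_p. split; [|split].
  - intros a b [t [It hat]] hba. exists t. split; [exact It | exact (le_trans _ _ _ hba hat)].
  - intros a b [t [It hat]] [t' [It' hbt']].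
    exists (t ⊔ t'). split; [exact (Ijoin t t' It It')|]. apply leUx.
    + apply le_trans with (t ⊔ e); [exact hat | apply leU2; [apply leUl | apply le_refl]].
    + apply le_trans with (t' ⊔ e); [exact hbt' | apply leU2; [apply leUr | apply le_refl]].
  - intros p Pp [t [It hpt]]. apply no_p. exists p, t. auto.
Qed.

Lemma maximal_avoiding_ideal :
  exists I, avoiding_ideal I /\ (forall e, below_N e -> I e) /\
    (forall e, ~ I e -> exists p t, P p /\ I t /\ p ≼ t ⊔ e).
Proof.
  destruct (@classical_sets.Zorn_bigcup A admissible chain_union_admissible) as [K [K_adm K_max]].
  exists (fun e => K e \/ below_N e). split; [exact K_adm|]. split; [intros e Be; right; exact Be|].
  intros e notIe. apply NNPP. intro no_p.
  pose proof (avoiding_extension _ e K_adm no_p) as ext_avoid.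
  assert (sub_ext : forall a, K a \/ below_N a -> exists t, (K t \/ below_N t) /\ a ≼ t ⊔ e).
  { intros a Ia. exists a. split; [exact Ia | apply leUl]. }
  apply (K_max (fun a => exists t, (K t \/ below_N t) /\ a ≼ t ⊔ e)).
  - split.
    + intros a Ka. exact (sub_ext a (or_introl Ka)).
    + intro ext_K. apply notIe. left. apply ext_K.
      destruct N_dir as [[n0 Nn0] _].
      exists ⊥. split; [right; exists n0; split; [exact Nn0 | apply le0x] | apply leUr].
  - destruct ext_avoid as [Edown [Ejoin Eavoid]]. split; [|split].
    + intros a b [Ea | Ba] hba; left; [exact (Edown a b Ea hba)|].
      exact (Edown a b (sub_ext a (or_intror Ba)) hba).
    + intros a b Ha Hb. left. apply Ejoin;
        [destruct Ha as [Ea | Ba] | destruct Hb as [Eb | Bb]]; auto.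
    + intros p Pp [Ep | Bp]; [exact (Eavoid p Pp Ep)|].
      exact (Eavoid p Pp (sub_ext p (or_intror Bp))).
Qed.

Theorem prime_filter_separation :
  exists x, prime_filter x /\ (forall p, P p -> x p) /\ (forall n, N n -> ~ x n).
Proof.
  destruct maximal_avoiding_ideal as [I [[Idown [Ijoin Iavoid]] [below_I I_max]]].
  destruct P_dir as [[p0 Pp0] P_down]. destruct N_dir as [[n0 Nn0] _].
  exists (fun e => ~ I e). split; [split|split].
  - intros a b. split.
    + intro nIab. split; intro I'; apply nIab; eapply Idown; eauto using leIl, leIr.
    + intros [nIa nIb] Iab.
      destruct (I_max a nIa) as [p [t [Pp [It hp]]]].
      destruct (I_max b nIb) as [p' [t' [Pp' [It' hp']]]].
      destruct (P_down p p' Pp Pp') as [q [Pq [hqp hqp']]].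
      apply (Iavoid q Pq), Idown with (t ⊔ t' ⊔ a ⊓ b); [apply Ijoin; auto|].
      rewrite joinIr. apply lexI.
      * apply le_trans with (t ⊔ a); [exact (le_trans _ _ _ hqp hp)|].
        apply leU2; [apply leUl | apply le_refl].
      * apply le_trans with (t' ⊔ b); [exact (le_trans _ _ _ hqp' hp')|].
        apply leU2; [apply leUr | apply le_refl].
  - intros a b. split.
    + intro nIab. destruct (classic (I a)) as [Ia | nIa]; [|left; exact nIa].
      destruct (classic (I b)) as [Ib | nIb]; [|right; exact nIb].
      exfalso. exact (nIab (Ijoin a b Ia Ib)).
    + intros [nIa | nIb] Iab; [apply nIa | apply nIb]; eapply Idown; eauto using leUl, leUr.
  - intro nI0. apply nI0, below_I. exists n0. split; [exact Nn0 | apply le0x].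
  - intro I1. exact (Iavoid p0 Pp0 (Idown _ _ I1 (lex1 p0))).
  - intros p Pp Ip. exact (Iavoid p Pp Ip).
  - intros n Nn nIn. apply nIn, below_I. exists n. split; [exact Nn | apply le_refl].
Qed.

End PrimeFilterTheorem.

Lemma separating_prime_filter {A : WHBAlgebra} (b b' : A) :
  ~ b ≼ b' -> exists x, prime_filter x /\ x b /\ ~ x b'.
Proof.
  intro nle.
  destruct (prime_filter_separation (fun e => e = b) (fun e => e = b'))
    as [x [px [xP xN]]]; auto using down_directed_single, up_directed_single.
  - intros p n -> ->. exact nle.
  - exists x. auto.
Qed.

Definition can_rel {A : WHBAlgebra} (x x' : A -> Prop) : Prop :=
  forall a b, x (a ⇒ b) -> x' a -> x' b.

Section CanonicalFrame.
Context {A : WHBAlgebra}.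
Implicit Types (x y : A -> Prop) (a b c d : A).

Lemma pf_rimp1_limp x c d : prime_filter x -> x c -> ~ x d -> x (⊤ ⇒ (c ⇐ d)).
Proof.
  intros px xc nxd.
  destruct (proj1 (pf_join _ px _ _) (pf_le x _ _ px xc (le_join_rimp1 c d))); tauto.
Qed.

Lemma pf_not_limp0_rimp x c d : prime_filter x -> x c -> ~ x d -> ~ x ((c ⇒ d) ⇐ ⊥).
Proof.
  intros px xc nxd x_cd. apply nxd, (pf_le x (c ⊓ ((c ⇒ d) ⇐ ⊥))); [exact px | | apply meet_limp0_le].
  apply (pf_meet _ px). auto.
Qed.

Lemma can_relP x y : prime_filter x -> prime_filter y ->
  can_rel y x <-> (forall a b, y a -> ~ y b -> x (a ⇐ b)).
Proof.
  intros px py. split.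
  - intros R a b ya nyb. exact (R _ _ (pf_rimp1_limp y a b py ya nyb) (pf_top _ px)).
  - intros H c d y_cd xc. apply NNPP. intro nxd.
    exact (pf_not_limp0_rimp x c d px xc nxd (H _ _ y_cd (pf_bot _ py))).
Qed.

(* Separate [N] from the meets [p ⊓ (c ⇐ d)] with [c ∈ x], [d ∉ x]: containing every
   such [c ⇐ d] makes the new filter a successor of [x] by [can_relP], and
   [c := ⊤], [d := ⊥] recovers [p]. *)
Lemma successor_exists x P N : prime_filter x -> down_directed P -> up_directed N ->
  (forall p n, P p -> N n -> ~ x (p ⇒ n)) ->
  exists x', prime_filter x' /\ can_rel x x' /\ (forall p, P p -> x' p) /\ (forall n, N n -> ~ x' n).
Proof.
  intros px [[p0 Pp0] P_down] N_dir apart.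
  set (Q := fun e => exists p c d, P p /\ x c /\ ~ x d /\ e = p ⊓ (c ⇐ d)).
  assert (Q_in : forall p c d, P p -> x c -> ~ x d -> Q (p ⊓ (c ⇐ d))).
  { intros p c d Pp xc nxd. exists p, c, d. auto. }
  destruct (prime_filter_separation Q N) as [x' [px' [Qx' Nx']]]; [| exact N_dir | |].
  - split; [exists (p0 ⊓ (⊤ ⇐ ⊥)); exact (Q_in _ _ _ Pp0 (pf_top _ px) (pf_bot _ px))|].
    intros q q' [p [c [d [Pp [xc [nxd ->]]]]]] [p' [c' [d' [Pp' [xc' [nxd' ->]]]]]].
    destruct (P_down p p' Pp Pp') as [p'' [Pp'' [hp hp']]].
    exists (p'' ⊓ (c ⊓ c' ⇐ d ⊔ d')). split; [|split].
    + apply Q_in; [exact Pp'' | apply (pf_meet _ px); auto |].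
      rewrite (pf_join _ px). tauto.
    + apply leI2; [exact hp | apply limp_le; [apply leIl | apply leUl]].
    + apply leI2; [exact hp' | apply limp_le; [apply leIr | apply leUr]].
  - intros q n [p [c [d [Pp [xc [nxd ->]]]]]] Nn hle.
    apply (apart p n Pp Nn), (pf_le x (⊤ ⇒ (c ⇐ d))); [exact px | apply pf_rimp1_limp; auto |].
    exact (rimp1_le_rimp _ _ _ hle).
  - exists x'. split; [exact px'|]. split; [|split; [|exact Nx']].
    + apply can_relP; [exact px' | exact px |]. intros c d xc nxd.
      apply (pf_meet _ px' p0 (c ⇐ d)), Qx', Q_in; auto.
    + intros p Pp. apply (pf_meet _ px' p (⊤ ⇐ ⊥)), Qx', Q_in; [exact Pp | exact (pf_top _ px) | exact (pf_bot _ px)].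
Qed.

Lemma predecessor_exists x P N : prime_filter x -> down_directed P -> up_directed N ->
  (forall p n, P p -> N n -> x (p ⇐ n)) ->
  exists x', prime_filter x' /\ can_rel x' x /\ (forall p, P p -> x' p) /\ (forall n, N n -> ~ x' n).
Proof.
  intros px P_dir [[n0 Nn0] N_up] apart.
  set (Q := fun e => exists n c d, N n /\ x c /\ ~ x d /\ e = n ⊔ (c ⇒ d)).
  assert (Q_in : forall n c d, N n -> x c -> ~ x d -> Q (n ⊔ (c ⇒ d))).
  { intros n c d Nn xc nxd. exists n, c, d. auto. }
  destruct (prime_filter_separation P Q) as [x' [px' [Px' Qx']]]; [exact P_dir | | |].
  - split; [exists (n0 ⊔ (⊤ ⇒ ⊥)); exact (Q_in _ _ _ Nn0 (pf_top _ px) (pf_bot _ px))|].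
    intros q q' [n [c [d [Nn [xc [nxd ->]]]]]] [n' [c' [d' [Nn' [xc' [nxd' ->]]]]]].
    destruct (N_up n n' Nn Nn') as [n'' [Nn'' [hn hn']]].
    exists (n'' ⊔ (c ⊓ c' ⇒ d ⊔ d')). split; [|split].
    + apply Q_in; [exact Nn'' | apply (pf_meet _ px); auto |].
      rewrite (pf_join _ px). tauto.
    + apply leU2; [exact hn | apply rimp_le; [apply leIl | apply leUl]].
    + apply leU2; [exact hn' | apply rimp_le; [apply leIr | apply leUr]].
  - intros p q Pp [n [c [d [Nn [xc [nxd ->]]]]]] hle.
    apply (pf_not_limp0_rimp x c d px xc nxd), (pf_le x (p ⇐ n)); [exact px | auto |].
    exact (limp_le_limp0 _ _ _ hle).
  - exists x'. split; [exact px'|]. split; [|split; [exact Px'|]].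
    + intros c d x'_cd xc. apply NNPP. intro nxd.
      apply (Qx' _ (Q_in n0 c d Nn0 xc nxd)), (pf_join _ px'). auto.
    + intros n Nn x'n.
      apply (Qx' _ (Q_in n ⊤ ⊥ Nn (pf_top _ px) (pf_bot _ px))), (pf_join _ px'). auto.
Qed.

End CanonicalFrame.

Section HomTransfer.
Context {A C : WHBAlgebra} (f : A -> C).
Hypothesis f_hom : is_hom A C f.
Implicit Types (y : C -> Prop) (z : A -> Prop).

Lemma hom_meet a b : f (a ⊓ b) = f a ⊓ f b. Proof. apply f_hom. Qed.
Lemma hom_join a b : f (a ⊔ b) = f a ⊔ f b. Proof. apply f_hom. Qed.
Lemma hom_rimp a b : f (a ⇒ b) = f a ⇒ f b. Proof. apply f_hom. Qed.
Lemma hom_limp a b : f (a ⇐ b) = f a ⇐ f b. Proof. apply f_hom. Qed.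
Lemma hom_bot : f ⊥ = ⊥. Proof. apply f_hom. Qed.
Lemma hom_top : f ⊤ = ⊤. Proof. apply f_hom. Qed.

Definition preimage y : A -> Prop := fun a => y (f a).

Definition image z : C -> Prop := fun e => exists a, z a /\ e = f a.

Lemma prime_filter_preimage y : prime_filter y -> prime_filter (preimage y).
Proof.
  intro py. unfold preimage. split.
  - intros a b. rewrite hom_meet. apply (pf_meet _ py).
  - intros a b. rewrite hom_join. apply (pf_join _ py).
  - rewrite hom_bot. exact (pf_bot _ py).
  - rewrite hom_top. exact (pf_top _ py).
Qed.

Lemma can_rel_preimage y y' : can_rel y y' -> can_rel (preimage y) (preimage y').
Proof. intros R a b. unfold preimage. rewrite hom_rimp. apply R. Qed.

Lemma down_directed_image z : prime_filter z -> down_directed (image z).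
Proof.
  intro pz. split; [exists (f ⊤), ⊤; split; [exact (pf_top _ pz) | reflexivity]|].
  intros p p' [a [za ->]] [a' [za' ->]].
  exists (f (a ⊓ a')). split; [exists (a ⊓ a'); split; [apply (pf_meet _ pz); auto | reflexivity]|].
  rewrite hom_meet. split; [apply leIl | apply leIr].
Qed.

Lemma up_directed_image_compl z : prime_filter z -> up_directed (image (fun a => ~ z a)).
Proof.
  intro pz. split; [exists (f ⊥), ⊥; split; [exact (pf_bot _ pz) | reflexivity]|].
  intros n n' [a [nza ->]] [a' [nza' ->]].
  exists (f (a ⊔ a')). split; [exists (a ⊔ a'); split; [rewrite (pf_join _ pz); tauto | reflexivity]|].
  rewrite hom_join. split; [apply leUl | apply leUr].
Qed.

Lemma image_separated y z :
  (forall p, image z p -> y p) -> (forall n, image (fun a => ~ z a) n -> ~ y n) ->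
  forall a, y (f a) <-> z a.
Proof.
  intros yP yN a. split.
  - intro yfa. apply NNPP. intro nza. exact (yN _ (ex_intro _ a (conj nza eq_refl)) yfa).
  - intro za. exact (yP _ (ex_intro _ a (conj za eq_refl))).
Qed.

Lemma successor_along y z : prime_filter y -> prime_filter z -> can_rel (preimage y) z ->
  exists y', prime_filter y' /\ can_rel y y' /\ forall a, y' (f a) <-> z a.
Proof.
  intros py pz R.
  destruct (successor_exists y (image z) (image (fun a => ~ z a)))
    as [y' [py' [Ry' [y'P y'N]]]];
    auto using down_directed_image, up_directed_image_compl.
  - intros p n [a [za ->]] [a' [nza' ->]] y_aa'. apply nza', (R a a'); [|exact za].
    unfold preimage. rewrite hom_rimp. exact y_aa'.
  - exists y'. auto using image_separated.
Qed.

Lemma predecessor_along y z : prime_filter y -> prime_filter z -> can_rel z (preimage y) ->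
  exists y', prime_filter y' /\ can_rel y' y /\ forall a, y' (f a) <-> z a.
Proof.
  intros py pz R.
  destruct (predecessor_exists y (image z) (image (fun a => ~ z a)))
    as [y' [py' [Ry' [y'P y'N]]]];
    auto using down_directed_image, up_directed_image_compl.
  - intros p n [a [za ->]] [a' [nza' ->]]. rewrite <- hom_limp.
    apply (can_relP (preimage y) z); auto using prime_filter_preimage.
  - exists y'. auto using image_separated.
Qed.

Lemma extension_along z : injective f -> prime_filter z ->
  exists y, prime_filter y /\ forall a, y (f a) <-> z a.
Proof.
  intros f_inj pz.
  destruct (prime_filter_separation (image z) (image (fun a => ~ z a)))
    as [y [py [yP yN]]];
    auto using down_directed_image, up_directed_image_compl.
  - intros p n [a [za ->]] [a' [nza' ->]] hle. apply nza', (pf_le z a); [exact pz | exact za |].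
    apply f_inj. rewrite hom_meet. exact hle.
  - exists y. auto using image_separated.
Qed.

End HomTransfer.

Definition compatible {A B C : WHBAlgebra} (i : A -> B) (j : A -> C)
  (x : B -> Prop) (y : C -> Prop) : Prop :=
  forall a, x (i a) <-> y (j a).

Lemma compatible_sym {A B C : WHBAlgebra} (i : A -> B) (j : A -> C) x y :
  compatible j i y x -> compatible i j x y.
Proof. intros H a. symmetry. apply H. Qed.

Section CompatiblePrimeFilters.
Context {A B C : WHBAlgebra} (i : A -> B) (j : A -> C).
Hypotheses (i_hom : is_hom A B i) (j_hom : is_hom A C j).
Implicit Types (x : B -> Prop) (y : C -> Prop).

Lemma compatible_successor x y b b' :
  prime_filter x -> prime_filter y -> compatible i j x y -> ~ x (b ⇒ b') ->
  exists x' y', prime_filter x' /\ prime_filter y' /\ compatible i j x' y' /\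
    can_rel x x' /\ can_rel y y' /\ x' b /\ ~ x' b'.
Proof.
  intros px py xy nx.
  destruct (successor_exists x (fun e => e = b) (fun e => e = b'))
    as [x' [px' [Rx [x'b x'b']]]]; auto using down_directed_single, up_directed_single.
  { intros p n -> ->. exact nx. }
  destruct (successor_along j j_hom y (preimage i x')) as [y' [py' [Ry x'y']]];
    auto using prime_filter_preimage.
  - intros a a' y_aa' x'a. apply (can_rel_preimage i i_hom x x' Rx a a'); [apply xy, y_aa' | exact x'a].
  - exists x', y'. split; [exact px'|]. split; [exact py'|].
    split; [intro a; symmetry; apply x'y'|]. repeat split; auto.
Qed.

Lemma compatible_predecessor x y b b' :
  prime_filter x -> prime_filter y -> compatible i j x y -> x (b ⇐ b') ->
  exists x' y', prime_filter x' /\ prime_filter y' /\ compatible i j x' y' /\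
    can_rel x' x /\ can_rel y' y /\ x' b /\ ~ x' b'.
Proof.
  intros px py xy x_bb'.
  destruct (predecessor_exists x (fun e => e = b) (fun e => e = b'))
    as [x' [px' [Rx [x'b x'b']]]]; auto using down_directed_single, up_directed_single.
  { intros p n -> ->. exact x_bb'. }
  destruct (predecessor_along j j_hom y (preimage i x')) as [y' [py' [Ry x'y']]];
    auto using prime_filter_preimage.
  - intros a a' x'_aa' ya. unfold preimage in *. apply xy.
    apply (can_rel_preimage i i_hom x' x Rx a a'); [exact x'_aa' | apply xy, ya].
  - exists x', y'. split; [exact px'|]. split; [exact py'|].
    split; [intro a; symmetry; apply x'y'|]. repeat split; auto.
Qed.

Lemma compatible_extension x : injective j -> prime_filter x ->
  exists y, prime_filter y /\ compatible i j x y.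
Proof.
  intros j_inj px.
  destruct (extension_along j j_hom (preimage i x)) as [y [py xy]];
    auto using prime_filter_preimage.
  exists y. split; [exact py|]. intro a. symmetry. apply xy.
Qed.

End CompatiblePrimeFilters.

Lemma pred_ext {T : Type} (U V : T -> Prop) : (forall t, U t <-> V t) -> U = V.
Proof. intro H. apply functional_extensionality. intro t. apply propositional_extensionality, H. Qed.

Definition frame_ops (T : Type) (R : T -> T -> Prop) : WHBOps (T -> Prop) := {|
  meet := fun U V t => U t /\ V t;
  join := fun U V t => U t \/ V t;
  rimp := fun U V t => forall t', R t t' -> U t' -> V t';
  limp := fun U V t => exists t', R t' t /\ U t' /\ ~ V t';
  bot := fun _ => False;
  top := fun _ => True
|}.

Lemma frame_ops_WHB (T : Type) (R : T -> T -> Prop) : is_WHB (frame_ops T R).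
Proof.
  unfold is_WHB, le. cbv zeta. simpl.
  repeat split; intros; apply pred_ext; intro t; try (firstorder; fail).
  - split; [|firstorder].
    intros [t' [Rt' [at' nbct']]]. destruct (classic (b t')) as [bt' | nbt'].
    + right. exists t'. tauto.
    + left. exists t'. tauto.
  - split; [tauto|]. intros [t' [Rt' [at' nct']]]. split; [exists t'; auto|].
    destruct (classic (b t')) as [bt' | nbt']; [right | left]; exists t'; tauto.
  - split; [tauto|]. intro at_. split; [exact at_|].
    destruct (classic (b t)) as [bt | nbt]; [left; exact bt | right].
    intros t' Rt' _. exists t. auto.
Qed.

Definition frame_algebra (T : Type) (R : T -> T -> Prop) : WHBAlgebra :=
  {| carrier := T -> Prop; ops := frame_ops T R; whb_ax := frame_ops_WHB T R |}.

Record bounded_projection {B : WHBAlgebra} {T : Type} (R : T -> T -> Prop)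
    (proj : T -> B -> Prop) : Prop := {
  bp_prime : forall t, prime_filter (proj t);
  bp_rel : forall t t', R t t' -> can_rel (proj t) (proj t');
  bp_rimp_back : forall t b b', ~ proj t (b ⇒ b') ->
    exists t', R t t' /\ proj t' b /\ ~ proj t' b';
  bp_limp_back : forall t b b', proj t (b ⇐ b') ->
    exists t', R t' t /\ proj t' b /\ ~ proj t' b'
}.

Section FrameEmbedding.
Context {B : WHBAlgebra} {T : Type} (R : T -> T -> Prop) (proj : T -> B -> Prop).

Lemma frame_embedding_hom :
  bounded_projection R proj -> is_hom B (frame_algebra T R) (fun b t => proj t b).
Proof.
  intros [prime rel rimp_back limp_back].
  split; [|split; [|split; [|split; [|split]]]]; intros; apply pred_ext; intro t; simpl.
  - apply (pf_meet _ (prime t)).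
  - apply (pf_join _ (prime t)).
  - split.
    + intros t_bb' t' Rtt'. exact (rel t t' Rtt' a b t_bb').
    + intro succ. apply NNPP. intro nt.
      destruct (rimp_back t a b nt) as [t' [Rtt' [t'a nt'b]]]. exact (nt'b (succ t' Rtt' t'a)).
  - split; [exact (limp_back t a b)|].
    intros [t' [Rt't [t'a nt'b]]].
    exact (proj1 (can_relP _ _ (prime t) (prime t')) (rel t' t Rt't) a b t'a nt'b).
  - split; [exact (pf_bot _ (prime t)) | contradiction].
  - split; [trivial | intros _; exact (pf_top _ (prime t))].
Qed.

Lemma frame_embedding_injective :
  (forall x, prime_filter x -> exists t, forall b, proj t b <-> x b) ->
  injective (fun b t => proj t b).
Proof.
  intros onto b b' E.
  assert (E_at : forall t, proj t b = proj t b') by (intro t; exact (equal_f E t)).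
  apply le_anti; apply NNPP; intro nle;
    destruct (separating_prime_filter _ _ nle) as [x [px [x1 nx2]]];
    destruct (onto x px) as [t xt]; apply nx2, xt.
  - rewrite <- E_at. apply xt, x1.
  - rewrite E_at. apply xt, x1.
Qed.

End FrameEmbedding.

Record compatible_pair {A B C : WHBAlgebra} (i : A -> B) (j : A -> C) : Type := CPair {
  cp_left : B -> Prop;
  cp_right : C -> Prop;
  cp_left_prime : prime_filter cp_left;
  cp_right_prime : prime_filter cp_right;
  cp_compatible : compatible i j cp_left cp_right
}.
Arguments CPair {A B C i j}.
Arguments cp_left {A B C i j}.
Arguments cp_right {A B C i j}.

Definition pair_rel {A B C : WHBAlgebra} {i : A -> B} {j : A -> C}
  (t t' : compatible_pair i j) : Prop :=
  can_rel (cp_left t) (cp_left t') /\ can_rel (cp_right t) (cp_right t').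

Section Amalgam.
Context {A B C : WHBAlgebra} (i : A -> B) (j : A -> C).
Hypotheses (i_hom : is_hom A B i) (j_hom : is_hom A C j).

Lemma amalgam_left_bounded : bounded_projection (@pair_rel _ _ _ i j) cp_left.
Proof.
  split.
  - exact (cp_left_prime i j).
  - intros t t' [Rl _]. exact Rl.
  - intros [x y px py xy] b b' nx.
    destruct (compatible_successor i j i_hom j_hom x y b b' px py xy nx)
      as [x' [y' [px' [py' [xy' [Rx [Ry [x'b nx'b']]]]]]]].
    exists (CPair x' y' px' py' xy'). repeat split; assumption.
  - intros [x y px py xy] b b' x_bb'.
    destruct (compatible_predecessor i j i_hom j_hom x y b b' px py xy x_bb')
      as [x' [y' [px' [py' [xy' [Rx [Ry [x'b nx'b']]]]]]]].
    exists (CPair x' y' px' py' xy'). repeat split; assumption.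
Qed.

Lemma amalgam_right_bounded : bounded_projection (@pair_rel _ _ _ i j) cp_right.
Proof.
  split.
  - exact (cp_right_prime i j).
  - intros t t' [_ Rr]. exact Rr.
  - intros [x y px py xy] c c' ny.
    destruct (compatible_successor j i j_hom i_hom y x c c' py px (compatible_sym _ _ _ _ xy) ny)
      as [y' [x' [py' [px' [yx' [Ry [Rx [y'c ny'c']]]]]]]].
    exists (CPair x' y' px' py' (compatible_sym _ _ _ _ yx')). repeat split; assumption.
  - intros [x y px py xy] c c' y_cc'.
    destruct (compatible_predecessor j i j_hom i_hom y x c c' py px (compatible_sym _ _ _ _ xy) y_cc')
      as [y' [x' [py' [px' [yx' [Ry [Rx [y'c ny'c']]]]]]]].
    exists (CPair x' y' px' py' (compatible_sym _ _ _ _ yx')). repeat split; assumption.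
Qed.

Lemma amalgam_left_onto : injective j ->
  forall x, prime_filter x -> exists t : compatible_pair i j, forall b, cp_left t b <-> x b.
Proof.
  intros j_inj x px. destruct (compatible_extension i j i_hom j_hom x j_inj px) as [y [py xy]].
  exists (CPair x y px py xy). reflexivity.
Qed.

Lemma amalgam_right_onto : injective i ->
  forall y, prime_filter y -> exists t : compatible_pair i j, forall c, cp_right t c <-> y c.
Proof.
  intros i_inj y py. destruct (compatible_extension j i j_hom i_hom y i_inj py) as [x [px yx]].
  exists (CPair x y px py (compatible_sym _ _ _ _ yx)). reflexivity.
Qed.

End Amalgam.

Theorem corollary6p26 :
  forall (A B C : WHBAlgebra) (i : A -> B) (j : A -> C),
    is_hom A B i -> injective i ->
    is_hom A C j -> injective j ->
    exists (D : WHBAlgebra) (h : B -> D) (k : C -> D),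
      is_hom B D h /\ injective h /\
      is_hom C D k /\ injective k /\
      (forall a : A, h (i a) = k (j a)).
Proof.
  intros A B C i j i_hom i_inj j_hom j_inj.
  exists (frame_algebra (compatible_pair i j) pair_rel),
    (fun b t => cp_left t b), (fun c t => cp_right t c).
  split; [exact (frame_embedding_hom _ _ (amalgam_left_bounded i j i_hom j_hom))|].
  split; [exact (frame_embedding_injective _ (amalgam_left_onto i j i_hom j_hom j_inj))|].
  split; [exact (frame_embedding_hom _ _ (amalgam_right_bounded i j i_hom j_hom))|].
  split; [exact (frame_embedding_injective _ (amalgam_right_onto i j i_hom j_hom i_inj))|].
  intro a. apply pred_ext. intro t. apply cp_compatible.
Qed.
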